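(* Let $k \ge 3$ and $n \ge 1$ be integers and let $1 \le \rho \le n$. Suppose there exist $k-2$ mutually orthogonal latin squares of order $n$ having a common partial transversal of size $\rho$. Then there exists a $((k-1)n+\rho, k)$-packing with exactly $\rho n + D(\rho,k)$ blocks in which the largest partial parallel class has size $\rho$.
   Context: For integers $v \ge k \ge 2$, a $(v,k)$-packing is a pair $(X,\mathcal{B})$ where $X$ is a set of $v$ points and $\mathcal{B}$ is a set of $k$-subsets of $X$ (blocks) such that every pair of distinct points lies in at most one block. For integers $m \ge 0$, $D(m,k)$ denotes the maximum number of $k$-subsets of an $m$-set such that every pair of points lies in at most one of them (so $D(m,k)=0$ if $m<k$). A partial parallel class (PPC) is a set of pairwise disjoint blocks; its size is the number of blocks. ''The largest PPC has size $\rho$'' means the packing has a PPC of size $\rho$ but none of size $\rho+1$. A common (partial) transversal of size $\rho$ of a set of latin squares of order $n$ is a set of $\rho$ cells, no two in the same row or the same column, such that in each of the latin squares the symbols in these $\rho$ cells are pairwise distinct. *)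

From mathcomp Require Import all_boot.
Set Implicit Arguments. Unset Strict Implicit. Unset Printing Implicit Defensive.

Definition latin_square (n : nat) (L : 'I_n -> 'I_n -> 'I_n) : Prop :=
  (forall i, injective (L i)) /\ (forall j, injective (fun i => L i j)).

(* Two latin squares are orthogonal: superimposing them, every ordered pair
   of symbols occurs (exactly) once, i.e. the cell -> pair map is injective. *)
Definition orthogonal (n : nat) (L1 L2 : 'I_n -> 'I_n -> 'I_n) : Prop :=
  forall c d : 'I_n * 'I_n,
    (L1 c.1 c.2, L2 c.1 c.2) = (L1 d.1 d.2, L2 d.1 d.2) -> c = d.

Definition MOLS (m n : nat) (L : 'I_m -> 'I_n -> 'I_n -> 'I_n) : Prop :=
  (forall t, latin_square (L t)) /\
  (forall s t, s != t -> orthogonal (L s) (L t)).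

Definition common_partial_transversal (m n : nat)
    (L : 'I_m -> 'I_n -> 'I_n -> 'I_n) (C : {set 'I_n * 'I_n}) (rho : nat) : Prop :=
  #|C| = rho /\
  forall c d, c \in C -> d \in C -> c != d ->
    [/\ c.1 != d.1, c.2 != d.2 &
        forall t, L t c.1 c.2 != L t d.1 d.2].

Definition is_packing (v k : nat) (B : {set {set 'I_v}}) : Prop :=
  (forall b, b \in B -> #|b| = k) /\
  (forall x y : 'I_v, x != y ->
     #|[set b in B | (x \in b) && (y \in b)]| <= 1).

Definition is_packingb (v k : nat) (B : {set {set 'I_v}}) : bool :=
  [forall b in B, #|b| == k] &&
  [forall x : 'I_v, forall y : 'I_v,
     (x != y) ==> (#|[set b in B | (x \in b) && (y \in b)]| <= 1)].

(* D(m,k): maximum number of blocks of an (m,k)-packing (0 if m < k). *)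
Definition D (m k : nat) : nat :=
  \max_(B : {set {set 'I_m}} | is_packingb k B) #|B|.

Definition is_PPC (v : nat) (B P : {set {set 'I_v}}) : Prop :=
  P \subset B /\
  (forall b c, b \in P -> c \in P -> b != c -> [disjoint b & c]).

Definition largest_PPC_size (v : nat) (B : {set {set 'I_v}}) (rho : nat) : Prop :=
  (exists P, is_PPC B P /\ #|P| = rho) /\
  ~ (exists P, is_PPC B P /\ #|P| = rho.+1).

From mathcomp Require Import all_boot.
Set Implicit Arguments. Unset Strict Implicit. Unset Printing Implicit Defensive.

(* The k-2 MOLS form a transversal design TD(k,n): the block of a cell is its
   row, its column and its k-2 symbols, and two cells share at most one of
   these coordinates. Keeping only the rho rows through the common transversal
   leaves rho*n blocks on (k-1)n+rho points, in which the rho row points form a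
   hole; fill it with a maximum (rho,k)-packing. Every block meets the rho row
   points, so a partial parallel class has at most rho blocks, while the blocks
   of the rho transversal cells are pairwise disjoint because transversal cells
   differ in every coordinate. *)

Section SetFamilies.
Variable T : finType.
Implicit Types (B P : {set {set T}}) (X : {set T}).

Definition partial_linear B : Prop :=
  {in B &, forall b b', b != b' -> #|b :&: b'| <= 1}.

Lemma partial_linearP B :
  partial_linear B <->
  (forall x y, x != y -> #|[set b in B | (x \in b) && (y \in b)]| <= 1).
Proof.
split=> [linB x y xy | pairB b b' bB b'B bb'].
  apply/card_le1_eqP => b b'; rewrite !inE => /andP[bB /andP[xb yb]].
  move=> /andP[b'B /andP[xb' yb']]; have [//|bb'] := eqVneq b b'.
  have xy_bb' : [set x; y] \subset b :&: b'.
    by apply/subsetP => z; rewrite !inE => /orP[]/eqP->; rewrite ?xb ?xb' ?yb ?yb'.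
  by move: (leq_trans (subset_leq_card xy_bb') (linB _ _ bB b'B bb')); rewrite cards2 xy.
apply/card_le1_eqP => x y; rewrite !inE => /andP[xb xb'] /andP[yb yb'].
have [//|xy] := eqVneq x y.
have bb'_xy : [set b; b'] \subset [set c in B | (x \in c) && (y \in c)].
  by apply/subsetP => c; rewrite !inE => /orP[]/eqP->; rewrite ?xb ?xb' ?yb ?yb' ?bB ?b'B.
by move: (leq_trans (subset_leq_card bb'_xy) (pairB _ _ xy)); rewrite cards2 bb'.
Qed.

Lemma trivIset_meet_card_leq P X :
  trivIset P -> {in P, forall b : {set T}, ~~ [disjoint b & X]} -> #|P| <= #|X|.
Proof.
move=> /trivIsetP disjP meetX.
pose witness b := [pick x in b :&: X].
have witnessP b : b \in P -> {x | witness b = Some x & x \in b :&: X}.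
  move=> bP; rewrite /witness; case: pickP => [x bXx | noX]; first by exists x.
  by exfalso; move: (meetX b bP); rewrite -setI_eq0; case/set0Pn => x; rewrite noX.
rewrite -(card_in_imset (f := witness)) => [|b c bP cP].
  rewrite -(card_imset X (@Some_inj _)); apply: subset_leq_card.
  apply/subsetP => _ /imsetP[b bP ->]; have [x -> ] := witnessP b bP.
  by rewrite inE => /andP[_ xX]; apply: imset_f.
have [x -> /setIP[xb _]] := witnessP b bP; have [y -> /setIP[yc _]] := witnessP c cP.
case=> xy; apply/eqP/contraT => /(disjP b c bP cP).
by rewrite -setI_eq0 => /eqP/setP/(_ x); rewrite !inE xb xy yc.
Qed.

End SetFamilies.

Lemma is_packingP v k (B : {set {set 'I_v}}) :
  reflect (is_packing k B) (is_packingb k B).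
Proof.
apply: (iffP andP) => [[/forall_inP cardB /forallP pairB] | [cardB pairB]].
  split=> [b /cardB/eqP // | x y]; exact/implyP/(forallP (pairB x)).
split; first by apply/forall_inP => b /cardB ->.
by apply/forallP => x; apply/forallP => y; apply/implyP; apply: pairB.
Qed.

Lemma D_attained m k : exists2 B : {set {set 'I_m}}, is_packing k B & #|B| = D m k.
Proof.
have packing_set0 : is_packingb k (set0 : {set {set 'I_m}}).
  apply/is_packingP; split=> [b | x y _]; first by rewrite inE.
  by apply/card_le1_eqP => b; rewrite !inE.
have [|B /is_packingP packB maxB] :=
  @eq_bigmax_cond {set {set 'I_m}} (is_packingb k) (fun B => #|B|).
  by apply/card_gt0P; exists set0.
by exists B; rewrite // /D maxB.
Qed.

Section InjectiveImage.
Variables (T : finType) (v : nat) (f : T -> 'I_v).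
Hypothesis f_inj : injective f.

Lemma is_packing_imset k (B : {set {set T}}) :
    {in B, forall b : {set T}, #|b| = k} -> partial_linear B ->
  is_packing k [set f @: b | b : {set T} in B].
Proof.
move=> cardB linB; split=> [_ /imsetP[b bB ->] | ]; first by rewrite card_imset // cardB.
apply/partial_linearP => _ _ /imsetP[b bB ->] /imsetP[c cB ->] fbc.
rewrite -imsetI; last by move=> x y _ _; apply: f_inj.
by rewrite card_imset //; apply: linB => //; apply: contraNneq fbc => ->.
Qed.

Lemma largest_PPC_size_imset (B P : {set {set T}}) (X : {set T}) :
    {in B, forall b : {set T}, ~~ [disjoint b & X]} -> P \subset B -> trivIset P ->
  #|P| = #|X| -> largest_PPC_size [set f @: b | b : {set T} in B] #|X|.
Proof.
move=> meetX PB /trivIsetP disjP cardP; split.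
  exists [set f @: b | b : {set T} in P].
  split; last by rewrite card_imset //; apply: imset_inj.
  split=> [|_ _ /imsetP[b bP ->] /imsetP[c cP ->] fbc]; first exact: imsetS.
  by rewrite imset_disjoint //; apply: disjP => //; apply: contraNneq fbc => ->.
case=> Q [[QB disjQ] cardQ].
suff : #|Q| <= #|f @: X| by rewrite cardQ card_imset // ltnn.
apply: trivIset_meet_card_leq => [|_ /(subsetP QB) /imsetP[b bB ->]]; first exact/trivIsetP.
by rewrite imset_disjoint //; apply: meetX.
Qed.

End InjectiveImage.

Section MOLSCoordinates.
Variables (m n : nat) (L : 'I_m -> 'I_n -> 'I_n -> 'I_n).

Definition mols_coord (g : option (option 'I_m)) (c : 'I_n * 'I_n) : 'I_n :=
  match g with None => c.1 | Some None => c.2 | Some (Some t) => L t c.1 c.2 end.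

Lemma MOLS_coord_pair_inj g g' : MOLS L -> g != g' ->
  injective (fun c => (mols_coord g c, mols_coord g' c)).
Proof.
move=> [latL orthL] gg' [a b] [a' b'] [] /=.
have row_inj t : L t a b = L t a' b' -> a = a' -> (a, b) = (a', b').
  by move=> E aa'; subst a'; rewrite (proj1 (latL t) a _ _ E).
have col_inj t : L t a b = L t a' b' -> b = b' -> (a, b) = (a', b').
  by move=> E bb'; subst b'; rewrite (proj2 (latL t) b _ _ E).
case: g g' gg' => [[s|]|] [[t|]|] //= gg'; try by move=> -> ->.
- have st : s != t by apply: contraNneq gg' => ->.
  by move=> Es Et; apply: (orthL s t st) => /=; rewrite Es Et.
- exact: col_inj.
- exact: row_inj.
- by move=> bb' /col_inj; apply.
- by move=> aa' /row_inj; apply.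
Qed.

Lemma common_partial_transversal_enum C rho :
  common_partial_transversal L C rho ->
  exists e : 'I_rho -> 'I_n * 'I_n,
    forall i i', i != i' -> forall g, mols_coord g (e i) != mols_coord g (e i').
Proof.
move=> [cardC transC].
pose e i := @enum_val _ (mem C) (cast_ord (esym cardC) i).
exists e => i i' ii' g.
have ee' : e i != e i' by rewrite (inj_eq enum_val_inj) (inj_eq (@cast_ord_inj _ _ _)).
have [row col sym] := transC (e i) (e i') (enum_valP _) (enum_valP _) ee'.
by case: g => [[t|]|]; rewrite /= ?sym.
Qed.

End MOLSCoordinates.

Section TruncatedTransversalDesign.
Variables (m n r : nat) (L : 'I_m -> 'I_n -> 'I_n -> 'I_n) (e : 'I_r -> 'I_n * 'I_n).
Hypothesis L_MOLS : MOLS L.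
Hypothesis e_transversal :
  forall i i', i != i' -> forall g, mols_coord L g (e i) != mols_coord L g (e i').

(* The row point [inl i] stands for the row of the transversal cell [e i]; the
   point [inr (h, s)] is symbol [s] of the column ([h = None]) or of square [t]
   ([h = Some t]). *)
Local Notation point := ('I_r + option 'I_m * 'I_n)%type.
Local Notation cell := ('I_r * 'I_n)%type.

Definition cell_of (c : cell) : 'I_n * 'I_n := ((e c.1).1, c.2).

Lemma cell_of_inj : injective cell_of.
Proof.
move=> [i j] [i' j'] [Ei ->]; congr pair; apply/eqP/contraT => ii'.
by move: (e_transversal ii' None); rewrite /= Ei eqxx.
Qed.

Definition point_at (c : cell) (g : option (option 'I_m)) : point :=
  if g is Some h then inr (h, mols_coord L (Some h) (cell_of c)) else inl c.1.

Lemma point_at_inj c c' g g' : point_at c g = point_at c' g' ->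
  g = g' /\ mols_coord L g (cell_of c) = mols_coord L g (cell_of c').
Proof. by case: g g' => [h|] [h'|] //= [-> //] ->. Qed.

Definition td_block (c : cell) : {set point} :=
  [set point_at c g | g : option (option 'I_m)].

Lemma card_td_block c : #|td_block c| = m.+2.
Proof.
rewrite card_imset; first by rewrite !card_option card_ord.
by move=> g g' /point_at_inj[].
Qed.

Lemma td_block_meet c c' : c != c' -> #|td_block c :&: td_block c'| <= 1.
Proof.
move=> cc'; apply/card_le1_eqP => x y.
rewrite !inE => /andP[/imsetP[g _ ->] /imsetP[g' _ /point_at_inj[_ Eg]]].
move=> /andP[/imsetP[h _ ->] /imsetP[h' _ /point_at_inj[_ Eh]]].
have [-> // | gh] := eqVneq g h.
have /cell_of_inj cc'E := MOLS_coord_pair_inj L_MOLS gh (f_equal2 pair Eg Eh).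
by rewrite cc'E eqxx in cc'.
Qed.

Lemma td_block_inj : injective td_block.
Proof.
move=> c c' Ec; apply/eqP/contraT => /td_block_meet.
by rewrite -Ec setIid card_td_block.
Qed.

Definition row_points : {set point} := [set inl i | i : 'I_r].

Lemma td_block_rows c : td_block c :&: row_points = [set inl c.1].
Proof.
apply/setP => x; rewrite !inE.
apply/andP/eqP => [[/imsetP[[h|] _ ->] /imsetP[i _]] // | ->].
by split; apply/imsetP; [exists None | exists c.1].
Qed.

Definition transversal_blocks : {set {set point}} :=
  [set td_block (i, (e i).2) | i : 'I_r].

Lemma card_transversal_blocks : #|transversal_blocks| = r.
Proof. by rewrite card_imset ?card_ord // => i i' /td_block_inj []. Qed.

Lemma transversal_blocks_trivIset : trivIset transversal_blocks.
Proof.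
apply/trivIsetP => _ _ /imsetP[i _ ->] /imsetP[i' _ ->] neq.
have ii' : i != i' by apply: contraNneq neq => ->.
rewrite -setI_eq0; apply/set0Pn => -[_ /setIP[/imsetP[g _ ->] /imsetP[g' _]]].
move=> /point_at_inj[_]; rewrite /cell_of /= -!surjective_pairing.
by apply/eqP; apply: e_transversal.
Qed.

Variable B0 : {set {set 'I_r}}.
Hypothesis B0_packing : is_packing m.+2 B0.

Definition packing_blocks : {set {set point}} :=
  [set td_block c | c : cell] :|: [set inl @: b | b : {set 'I_r} in B0].

Lemma packing_blocks_uniform :
  {in packing_blocks, forall b : {set point}, #|b| = m.+2}.
Proof.
move=> _ /setUP[/imsetP[c _ ->] | /imsetP[b bB0 ->]]; first exact: card_td_block.
by rewrite card_imset; [apply: B0_packing.1 | apply: inl_inj].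
Qed.

Lemma base_block_rows (a : {set 'I_r}) : inl @: a \subset row_points.
Proof. exact/imsetS/subset_predT. Qed.

Lemma td_block_meet_rows c (S : {set point}) :
  S \subset row_points -> #|td_block c :&: S| <= 1.
Proof.
move=> S_rows; rewrite -(cards1 (inl c.1 : point)) -td_block_rows.
by apply/subset_leq_card/setIS.
Qed.

Lemma packing_blocks_linear : partial_linear packing_blocks.
Proof.
move=> b b' /setUP[/imsetP[c _ ->] | /imsetP[a aB0 ->]]
  /setUP[/imsetP[c' _ ->] | /imsetP[a' a'B0 ->]] neq.
- by apply: td_block_meet; apply: contraNneq neq => ->.
- exact/td_block_meet_rows/base_block_rows.
- by rewrite setIC; apply/td_block_meet_rows/base_block_rows.
rewrite -imsetI => [|x y _ _]; last exact: inl_inj.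
rewrite card_imset; last exact: inl_inj.
by apply: (proj2 (partial_linearP B0) B0_packing.2) => //; apply: contraNneq neq => ->.
Qed.

Lemma card_packing_blocks : #|packing_blocks| = r * n + #|B0|.
Proof.
rewrite cardsU card_imset; last exact: td_block_inj.
rewrite card_imset; last exact/imset_inj/inl_inj.
suff -> : [set td_block c | c : cell] :&: [set inl @: b | b : {set 'I_r} in B0] = set0.
  by rewrite cards0 subn0 card_prod !card_ord.
apply/setP => b; rewrite !inE; apply/andP => -[/imsetP[c _ ->] /imsetP[a _ Ec]].
have : #|td_block c :&: td_block c| <= 1.
  by apply: td_block_meet_rows; rewrite Ec; apply: base_block_rows.
by rewrite setIid card_td_block.
Qed.

Lemma packing_blocks_meet_rows :
  {in packing_blocks, forall b : {set point}, ~~ [disjoint b & row_points]}.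
Proof.
move=> _ /setUP[/imsetP[c _ ->] | /imsetP[a aB0 ->]]; rewrite -setI_eq0.
  by rewrite td_block_rows; apply/set0Pn; exists (inl c.1); rewrite inE.
have : 0 < #|a| by rewrite (B0_packing.1 a aB0).
case/card_gt0P => i ai; apply/set0Pn; exists (inl i).
by rewrite inE; apply/andP; split; apply: imset_f.
Qed.

Lemma truncated_TD_packing : exists B : {set {set 'I_(m.+1 * n + r)}},
  [/\ is_packing m.+2 B, #|B| = r * n + #|B0| & largest_PPC_size B r].
Proof.
have card_point : #|{: point}| = m.+1 * n + r.
  by rewrite card_sum card_prod card_option !card_ord addnC.
pose f (x : point) := cast_ord card_point (enum_rank x).
have f_inj : injective f by move=> x y /cast_ord_inj/enum_rank_inj.
exists [set f @: b | b : {set point} in packing_blocks]; split.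
- exact: is_packing_imset packing_blocks_uniform packing_blocks_linear.
- by rewrite card_imset ?card_packing_blocks //; apply: imset_inj.
have card_rows : #|row_points| = r by rewrite card_imset ?card_ord //; apply: inl_inj.
have transversal_sub : transversal_blocks \subset packing_blocks.
  by apply/subsetP => _ /imsetP[i _ ->]; rewrite inE imset_f.
have := largest_PPC_size_imset f_inj packing_blocks_meet_rows transversal_sub
  transversal_blocks_trivIset.
by rewrite card_rows card_transversal_blocks; apply.
Qed.

End TruncatedTransversalDesign.

Theorem theorem5p1 (k n rho : nat) :
  3 <= k -> 1 <= n -> 1 <= rho -> rho <= n ->
  (exists (L : 'I_(k - 2) -> 'I_n -> 'I_n -> 'I_n) (C : {set 'I_n * 'I_n}),
      MOLS L /\ common_partial_transversal L C rho) ->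
  exists B : {set {set 'I_((k - 1) * n + rho)}},
    [/\ is_packing k B, #|B| = rho * n + D rho k & largest_PPC_size B rho].
Proof.
case: k => [|[|m]] //; rewrite !subSS !subn0 => _ _ _ _ [L [C [L_MOLS C_transversal]]].
have [e e_transversal] := common_partial_transversal_enum C_transversal.
have [B0 B0_packing <-] := D_attained rho m.+2.
exact: (truncated_TD_packing L_MOLS e_transversal B0_packing).
Qed.
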